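(* Let $\Phi_1,\Phi_2\in\mathrm{SL}(2,\mathbb C)$ be the monodromy matrices defined below. (a) $\Phi_1$ and $\Phi_2$ have the forms $$\Phi_1=\begin{pmatrix}r_1&p\\ -\bar p&r_2\end{pmatrix},\qquad \Phi_2=\begin{pmatrix}q&ir_3\\ ir_4&\bar q\end{pmatrix}$$ with $p,q\in\mathbb C$ and $r_1,r_2,r_3,r_4\in\mathbb R$. (b) Assume $p\neq0$, $q\neq0$, $r_1\neq r_2$ and $r_3\neq r_4$. Put $$h_1=\frac{2\,\Re(p)}{r_2-r_1},\qquad h_2=\frac{2\,\Im(q)}{r_4-r_3}.$$ - There exist real $\alpha,\beta$ with $\alpha^2-\beta^2=1$ such that, for $S=\begin{pmatrix}\alpha&\beta\\ \beta&\alpha\end{pmatrix}$, both matrices $S^{-1}\Phi_1S$ and $S^{-1}\Phi_2S$ lie in $\mathrm{SU}(2)$, if and only if $h_1=h_2$ and $|h_1|>1$. In that case $\alpha,\beta$ are determined by $\frac{\alpha^2+\beta^2}{2\alpha\beta}=h_1$. - There exist real $\alpha,\beta$ with $-2\alpha\beta=1$ such that, for $S=\begin{pmatrix}\alpha&\beta\\ \alpha&-\beta\end{pmatrix}$, both matrices $S^{-1}\Phi_1S$ and $S^{-1}\Phi_2S$ lie in $\mathrm{SU}(1,1)$, if and only if $h_1=h_2$ and $|h_1|<1$. In that case $\alpha,\beta$ are determined by $\frac{\alpha^2-\beta^2}{\alpha^2+\beta^2}=h_1$. In particular, the closing conditions along $\gamma_1,\gamma_2$ for $f_H$ or $f_S$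 reduce to the single condition $h_1=h_2\in\mathbb R\setminus\{\pm1\}$. Then $|h_1|>1$ gives a surface in $H^3$, and $|h_1|<1$ gives a surface in $S^3_1$.
   Context: Fix an integer $k\ge1$, a real number $\lambda>1$ and a real number $c\ne0$. Let $$\overline M=\Big\{(z,w)\in(\mathbb C\cup\{\infty\})^2 : w^{k+1}=z\Big(\frac{z-\lambda^{-1}}{\lambda-z}\Big)^k\Big\},$$ a compact Riemann surface of genus $k$. Let $M=\overline M\setminus\{(0,0),(\infty,\infty)\}$, with universal cover $\widetilde M$. Set $G=\lambda^{k/(k+1)}w$, $\Omega=c\,\frac{dz}{zw}$, $w_0=\lambda^{-k/(k+1)}$ and $\Lambda=e^{2\pi i/(k+1)}$. Let $\kappa_1(z,w)=(\bar z,\bar w)$, $\kappa_2(z,w)=\big(1/z,\ \lambda^{-2k/(k+1)}/w\big)$ and $\kappa_3(z,w)=(\bar z,\Lambda\bar w)$. Paths and loops in $M$: - $c_1$ goes from $(1,w_0)$ through $\{\Im z<0\}$, with embedded $z$-projection, to a point with real $z\in(0,\lambda^{-1})$. - $c_2$ goes from $(1,w_0)$ through $\{\Im z<0\}$, with embedded $z$-projection, to a point with real $z<0$. - $\gamma_1$ is the concatenation $c_1$, then $\kappa_3\circ c_1^{-1}$, then $\kappa_2\circ\kappa_1\circ\kappa_3\circ c_1$, then $\kappa_1\circ\kappa_2\circ c_1^{-1}$. It is a loop at $(1,w_0)$ whose $z$-projection winds once around $[\lambda^{-1},\lambda]$. - $\gamma_2$ is the concatenation $c_2$, then $\kappa_1\circ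 c_2^{-1}$. It is a loop at $(1,w_0)$ whose $z$-projection winds once around $0$. Let $F:\widetilde M\to\mathrm{SL}(2,\mathbb C)$ solve $$dF\,F^{-1}=\begin{pmatrix}G&-G^2\\ 1&-G\end{pmatrix}\Omega$$ with $F=\mathrm{id}$ at a lift of $(1,w_0)$. Let $\tau_j$ be the deck transformation of $\widetilde M$ corresponding to $\gamma_j$. With $\begin{pmatrix}A_j&B_j\\ C_j&D_j\end{pmatrix}$ the value of $F$ continued along $c_j$ to $c_j(1)$, define $\Phi_1,\Phi_2$ by $F\circ\tau_j=F\Phi_j$. Explicitly, $$\Phi_1=\begin{pmatrix}\bar A_1&-\bar C_1\\ -\bar B_1&\bar D_1\end{pmatrix}\begin{pmatrix}D_1&\Lambda C_1\\ \Lambda^{-1}B_1&A_1\end{pmatrix}\begin{pmatrix}\bar D_1&-\Lambda\bar B_1\\ -\Lambda^{-1}\bar C_1&\bar A_1\end{pmatrix}\begin{pmatrix}A_1&B_1\\ C_1&D_1\end{pmatrix},$$ $$\Phi_2=\begin{pmatrix}\bar D_2&-\bar B_2\\ -\bar C_2&\bar A_2\end{pmatrix}\begin{pmatrix}A_2&B_2\\ C_2&D_2\end{pmatrix}.$$ If the initial condition is replaced by $F=S$ at the base point, the monodromies along $\gamma_j$ become $S^{-1}\Phi_jS$. Surfaces: $H^3=\{aa^*\}$ and $S^3_1=\{a e_3 a^*\}$ for $a\in\mathrm{SL}(2,\mathbb C)$, where $a^*=\bar a^{t}$ and $e_3=\mathrm{diag}(1,-1)$. Put $f_H=FF^*$ (a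 constant mean curvature $1$ immersion into $H^3$) and $f_S=Fe_3F^*$ (a constant mean curvature $1$ face into $S^3_1$). $\mathrm{SU}(1,1)=\{X\in\mathrm{SL}(2,\mathbb C): Xe_3X^*=e_3\}$. *)

From HB Require Import structures.
From mathcomp Require Import all_boot all_order all_algebra.
Set Implicit Arguments. Unset Strict Implicit. Unset Printing Implicit Defensive.
Import Order.TTheory GRing.Theory Num.Theory.
Local Open Scope ring_scope.

Definition mx2 {R : Type} (a b c d : R) : 'M[R]_2 :=
  \matrix_(i < 2, j < 2)
     if i == 0 :> nat then (if j == 0 :> nat then a else b)
     else (if j == 0 :> nat then c else d).

Section Defs.
Variable C : numClosedFieldType.

Definition adj2 (X : 'M[C]_2) : 'M[C]_2 := (map_mx Num.conj X)^T.

Definition e3 : 'M[C]_2 := mx2 1 0 0 (-1).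

Definition inSU2 (X : 'M[C]_2) : Prop := X *m adj2 X = 1%:M /\ \det X = 1.
Definition inSU11 (X : 'M[C]_2) : Prop := X *m e3 *m adj2 X = e3 /\ \det X = 1.

(* Lambda = e^{2 pi i/(k+1)} = (e^{i pi/(k+1)})^2 ; n.-root (-1) = e^{i pi/n} *)
Definition Lam (k : nat) : C := ((k.+1).-root (-1)) ^+ 2.

(* Monodromies, as given explicitly in terms of the values
   (A_j B_j; C_j D_j) of F continued along c_j. *)
Definition Phi1 (k : nat) (A B Cc D : C) : 'M[C]_2 :=
  let L := Lam k in
  mx2 (A^*) (- Cc^*) (- B^*) (D^*)
  *m mx2 D (L * Cc) (L^-1 * B) A
  *m mx2 (D^*) (- (L * B^*)) (- (L^-1 * Cc^*)) (A^*)
  *m mx2 A B Cc D.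

Definition Phi2 (A B Cc D : C) : 'M[C]_2 :=
  mx2 (D^*) (- B^*) (- Cc^*) (A^*) *m mx2 A B Cc D.

End Defs.

(* Conjugating by S turns "S^-1 Phi S lies in SU(2)", resp. "in SU(1,1)",
   into "Phi preserves the Hermitian form H = S S^*", resp. "H = S e3 S^*".  For
   the two normalizations of S in the theorem, H has the shape [[a, b], [b, a]]
   with (a, b) = (al^2 + be^2, 2 al be), a point of the hyperbola
   a^2 - b^2 = 1 (resp. (a, b) = (al^2 - be^2, al^2 + be^2), a point of
   b^2 - a^2 = 1).  For Phi1 = [[r1, p], [-conj p, r2]] and
   Phi2 = [[q, i r3], [i r4, conj q]] of determinant 1, preserving such a form
   is a LINEAR condition, namely a = h_j b.  Hence both monodromies can be
   unitarized iff h1 = h2 is the slope of a point on the relevant hyperbola,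
   i.e. |h1| > 1 (resp. |h1| < 1), and then the slope determines al, be. *)
From HB Require Import structures.
From mathcomp Require Import all_boot all_order all_algebra.
From mathcomp Require Import ring.
Set Implicit Arguments. Unset Strict Implicit. Unset Printing Implicit Defensive.
Import Order.TTheory GRing.Theory Num.Theory.
Local Open Scope ring_scope.

Section Matrix2.
Variable R : comPzRingType.
Implicit Types a b c d e f g h : R.

Lemma mx2E a b c d (i j : 'I_2) :
  mx2 a b c d i j = if i == 0 :> nat then (if j == 0 :> nat then a else b)
                    else (if j == 0 :> nat then c else d).
Proof. by rewrite mxE. Qed.

Lemma mx2P a b c d a' b' c' d' :
  mx2 a b c d = mx2 a' b' c' d' <-> [/\ a = a', b = b', c = c' & d = d'].
Proof.
split=> [E | [-> -> -> ->] //].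
have entry i j := congr1 (fun M : 'M_2 => M i j) E.
by move: (entry 0 0) (entry 0 1) (entry 1 0) (entry 1 1); rewrite !mx2E.
Qed.

Lemma mul_mx2 a b c d e f g h :
  mx2 a b c d *m mx2 e f g h =
  mx2 (a * e + b * g) (a * f + b * h) (c * e + d * g) (c * f + d * h).
Proof.
apply/matrixP => i j; rewrite !mxE !big_ord_recl big_ord0 !mx2E addr0.
by case: i => [[|[|//]] ?]; case: j => [[|[|//]] ?].
Qed.

Lemma det_mx2 a b c d : \det (mx2 a b c d) = a * d - b * c.
Proof.
rewrite (expand_det_row _ 0) !big_ord_recl big_ord0 addr0 /cofactor !det_mx11.
by rewrite !mxE /= expr0 mul1r expr1 mulN1r mulrN.
Qed.

Lemma mx2_id : (1%:M : 'M[R]_2) = mx2 1 0 0 1.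
Proof.
apply/matrixP => i j; rewrite !mxE.
by case: i => [[|[|//]] ?]; case: j => [[|[|//]] ?].
Qed.

End Matrix2.

Section Adjoint.
Variable C : numClosedFieldType.
Implicit Types (a b c d : C) (P S G H : 'M[C]_2).

Lemma adj2_mx2 a b c d : adj2 (mx2 a b c d) = mx2 a^* c^* b^* d^*.
Proof.
apply/matrixP => i j; rewrite /adj2 !mxE.
by case: i => [[|[|//]] ?]; case: j => [[|[|//]] ?].
Qed.

Lemma adj2M P S : adj2 (P *m S) = adj2 S *m adj2 P.
Proof. by rewrite /adj2 map_mxM trmx_mul. Qed.

Lemma adj2_id : adj2 (1%:M : 'M[C]_2) = 1%:M.
Proof. by rewrite mx2_id adj2_mx2 rmorph1 rmorph0 -mx2_id. Qed.

Lemma conj_preserves_iff S P G : S \in unitmx ->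
  (invmx S *m P *m S) *m G *m adj2 (invmx S *m P *m S) = G <->
  P *m (S *m G *m adj2 S) *m adj2 P = S *m G *m adj2 S.
Proof.
move=> uS; set K := S *m G *m adj2 S.
have SV : S *m invmx S = 1%:M by rewrite mulmxV.
have VS : invmx S *m S = 1%:M by rewrite mulVmx.
have SVadj : adj2 (invmx S) *m adj2 S = 1%:M by rewrite -adj2M SV adj2_id.
have VSadj : adj2 S *m adj2 (invmx S) = 1%:M by rewrite -adj2M VS adj2_id.
have back X : S *m (invmx S *m X *m adj2 (invmx S)) *m adj2 S = X.
  by rewrite !mulmxA SV mul1mx -!mulmxA SVadj mulmx1.
have GE : G = invmx S *m K *m adj2 (invmx S).
  by rewrite /K !mulmxA VS mul1mx -!mulmxA VSadj mulmx1.
have -> : (invmx S *m P *m S) *m G *m adj2 (invmx S *m P *m S) =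
          invmx S *m (P *m K *m adj2 P) *m adj2 (invmx S).
  by rewrite /K !adj2M !mulmxA.
rewrite [in RHS]GE; split=> [E | -> //].
by rewrite -(back (P *m K *m adj2 P)) E back.
Qed.

(* If Q inverts P^*, then P preserves H iff P intertwines H with Q;
   the latter condition is linear in H. *)
Lemma preserves_iff_intertwines P Q H : adj2 P *m Q = 1%:M ->
  P *m H *m adj2 P = H <-> P *m H = H *m Q.
Proof.
move=> PQ; have QP := mulmx1C PQ; split=> E.
  by rewrite -[in RHS]E -[RHS]mulmxA PQ mulmx1.
by rewrite E -[LHS]mulmxA QP mulmx1.
Qed.

Lemma det_conj S P : S \in unitmx -> \det (invmx S *m P *m S) = \det P.
Proof.
by move=> uS; rewrite !det_mulmx mulrC mulrA -det_mulmx mulmxV // det1 mul1r.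
Qed.

(* The Hermitian forms S S^* and S e3 S^* produced by the two normalizations
   of the theorem are both of the shape [[a, b], [b, a]]. *)
Definition hform a b : 'M[C]_2 := mx2 a b b a.

Lemma SU2_conj_iff (al be : C) P : al \is Num.real -> be \is Num.real ->
  al ^+ 2 - be ^+ 2 = 1 -> \det P = 1 ->
  let S := mx2 al be be al in
  let H := hform (al ^+ 2 + be ^+ 2) (2 * al * be) in
  inSU2 (invmx S *m P *m S) <-> P *m H *m adj2 P = H.
Proof.
move=> alR beR detS detP S H.
have uS : S \in unitmx by rewrite unitmxE det_mx2 unitfE -!expr2 detS oner_eq0.
have SSadj : S *m 1%:M *m adj2 S = H.
  rewrite mulmx1 adj2_mx2 !conj_Creal // mul_mx2.
  by apply/mx2P; split; ring.
rewrite /inSU2 det_conj // detP -SSadj -(conj_preserves_iff _ _ uS) mulmx1.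
by split=> [[]|].
Qed.

Lemma SU11_conj_iff (al be : C) P : al \is Num.real -> be \is Num.real ->
  - (2 * al * be) = 1 -> \det P = 1 ->
  let S := mx2 al be al (- be) in
  let H := hform (al ^+ 2 - be ^+ 2) (al ^+ 2 + be ^+ 2) in
  inSU11 (invmx S *m P *m S) <-> P *m H *m adj2 P = H.
Proof.
move=> alR beR detS detP S H.
have uS : S \in unitmx.
  rewrite unitmxE det_mx2 unitfE.
  have -> : al * - be - be * al = - (2 * al * be) by ring.
  by rewrite detS oner_eq0.
have Se3Sadj : S *m e3 C *m adj2 S = H.
  rewrite /e3 adj2_mx2 !conj_Creal ?rpredN // !mul_mx2.
  by apply/mx2P; split; ring.
rewrite /inSU11 det_conj // detP -Se3Sadj -(conj_preserves_iff _ _ uS).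
by split=> [[]|].
Qed.

End Adjoint.

Section Shapes.
Variable C : numClosedFieldType.
Implicit Types (a b p q : C).

Lemma eq_iff_prop_diff (k x y u v : C) :
  k != 0 -> x - y = k * (u - v) -> (x = y <-> u = v).
Proof.
move=> k0 E.
have key : (x == y) = (u == v) by rewrite -subr_eq0 E mulf_eq0 (negbTE k0) subr_eq0.
by split=> /eqP E'; apply/eqP; [rewrite -key | rewrite key].
Qed.

Lemma eq_ratio a b (n d : C) : d != 0 -> (a * d = b * n <-> a = n / d * b).
Proof.
move=> d0; split=> [E | ->]; last by field.
by apply: (mulIf d0); rewrite E; field.
Qed.

Lemma shape1_preserves_iff (r1 r2 : C) p a b :
  r1 \is Num.real -> r2 \is Num.real -> \det (mx2 r1 p (- p^*) r2) = 1 ->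
  let P := mx2 r1 p (- p^*) r2 in
  P *m hform a b *m adj2 P = hform a b <-> a * (r2 - r1) = b * (p + p^*).
Proof.
move=> r1R r2R; rewrite det_mx2 => det1 P.
have invP : adj2 P *m mx2 r2 p (- p^*) r1 = 1%:M.
  rewrite /P adj2_mx2 rmorphN /= conjCK (conj_Creal r1R) (conj_Creal r2R).
  rewrite mul_mx2 mx2_id.
  by apply/mx2P; split; rewrite -?det1; ring.
rewrite (preserves_iff_intertwines _ invP) /hform !mul_mx2 mx2P.
have e00 : r1 * a + p * b = a * r2 + b * - p^* <-> a * (r2 - r1) = b * (p + p^*).
  by apply: (@eq_iff_prop_diff (-1)); rewrite ?oppr_eq0 ?oner_eq0 //; ring.
have e11 : - p^* * b + r2 * a = b * p + a * r1 <-> a * (r2 - r1) = b * (p + p^*).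
  by apply: (@eq_iff_prop_diff 1); rewrite ?oner_eq0 //; ring.
split=> [[/e00] // | E]; split; [exact/e00 | ring | ring | exact/e11].
Qed.

Lemma shape2_preserves_iff q (r3 r4 : C) a b :
  r3 \is Num.real -> r4 \is Num.real -> \det (mx2 q ('i * r3) ('i * r4) q^*) = 1 ->
  let P := mx2 q ('i * r3) ('i * r4) q^* in
  P *m hform a b *m adj2 P = hform a b <->
  a * (r4 - r3) = b * ('i * (q^* - q)).
Proof.
move=> r3R r4R; rewrite det_mx2 => det1 P.
have invP : adj2 P *m mx2 q ('i * r4) ('i * r3) q^* = 1%:M.
  rewrite /P adj2_mx2 conjCK !rmorphM /= conjCi (conj_Creal r3R) (conj_Creal r4R).
  rewrite mul_mx2 mx2_id.
  by apply/mx2P; split; rewrite -?det1; ring.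
rewrite (preserves_iff_intertwines _ invP) /hform !mul_mx2 mx2P.
have ii : 'i * 'i = -1 :> C by rewrite -expr2 sqrCi.
have e01 : q * b + 'i * r3 * a = a * ('i * r4) + b * q^* <->
           a * (r4 - r3) = b * ('i * (q^* - q)).
  apply: (@eq_iff_prop_diff (- 'i)); first by rewrite oppr_eq0 neq0Ci.
  have -> : - 'i * (a * (r4 - r3) - b * ('i * (q^* - q))) =
            - 'i * a * (r4 - r3) + 'i * 'i * b * (q^* - q) by ring.
  by rewrite ii; ring.
have e10 : 'i * r4 * a + q^* * b = b * q + a * ('i * r3) <->
           a * (r4 - r3) = b * ('i * (q^* - q)).
  apply: (@eq_iff_prop_diff 'i); first exact: neq0Ci.
  have -> : 'i * (a * (r4 - r3) - b * ('i * (q^* - q))) =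
            'i * a * (r4 - r3) - 'i * 'i * b * (q^* - q) by ring.
  by rewrite ii; ring.
split=> [[_ /e01] // | E]; split; [ring | exact/e01 | exact/e10 | ring].
Qed.

Lemma shape1_preserves_ratio (r1 r2 : C) p a b :
  r1 \is Num.real -> r2 \is Num.real -> r1 != r2 -> \det (mx2 r1 p (- p^*) r2) = 1 ->
  let P := mx2 r1 p (- p^*) r2 in
  P *m hform a b *m adj2 P = hform a b <-> a = 2 * 'Re p / (r2 - r1) * b.
Proof.
move=> r1R r2R r12 det1 P; rewrite shape1_preserves_iff // eq_ratio ?subr_eq0 1?eq_sym //.
by rewrite ReE [2 * _]mulrC divfK // pnatr_eq0.
Qed.

Lemma shape2_preserves_ratio q (r3 r4 : C) a b :
  r3 \is Num.real -> r4 \is Num.real -> r3 != r4 ->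
  \det (mx2 q ('i * r3) ('i * r4) q^*) = 1 ->
  let P := mx2 q ('i * r3) ('i * r4) q^* in
  P *m hform a b *m adj2 P = hform a b <-> a = 2 * 'Im q / (r4 - r3) * b.
Proof.
move=> r3R r4R r34 det1 P; rewrite shape2_preserves_iff // eq_ratio ?subr_eq0 1?eq_sym //.
by rewrite ImE [2 * _]mulrC divfK // pnatr_eq0.
Qed.

End Shapes.

Section Monodromy.
Variable C : numClosedFieldType.
Implicit Types (A B Cc D : C) (k : nat).

(* Lambda is a root of unity, so it lies on the unit circle. *)
Lemma Lam_unitary k : Lam C k != 0 /\ (Lam C k)^* = (Lam C k)^-1.
Proof.
have L1 : `|Lam C k| = 1.
  by rewrite normrX norm_rootC normrN normr1 rootC1 // expr1n.
have LLc : Lam C k * (Lam C k)^* = 1 by rewrite -normCK L1 expr1n.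
have L0 : Lam C k != 0 by rewrite -normr_eq0 L1 oner_eq0.
by split=> //; rewrite -[_^*](mulKf L0) LLc mulr1.
Qed.

Lemma Phi1_form k A B Cc D : exists p r1 r2,
  [/\ r1 \is Num.real, r2 \is Num.real & Phi1 k A B Cc D = mx2 r1 p (- p^*) r2].
Proof.
have [] := Lam_unitary k; rewrite /Phi1; move: (Lam C k) => L L0 LV.
rewrite !mul_mx2; eexists _, _, _; split; last (apply/mx2P; split=> //).
all: try (rewrite CrealE; apply/eqP).
all: rewrite !(rmorphD, rmorphN, rmorphM, fmorphV) /= !(conjCK, LV, invrK).
all: by field.
Qed.

Lemma Phi2_form A B Cc D : exists q r3 r4,
  [/\ r3 \is Num.real, r4 \is Num.real & Phi2 A B Cc D = mx2 q ('i * r3) ('i * r4) q^*].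
Proof.
have iiK (x : C) : 'i * (- 'i * x) = x.
  by rewrite mulrA mulrN -expr2 sqrCi opprK mul1r.
rewrite /Phi2 mul_mx2.
exists (D^* * A + - B^* * Cc), (- 'i * (D^* * B + - B^* * D)),
  (- 'i * (- Cc^* * A + A^* * Cc)); split; last (rewrite !iiK; apply/mx2P; split=> //).
all: try (rewrite CrealE; apply/eqP).
all: by rewrite !(rmorphD, rmorphN, rmorphM) /= ?conjCi !conjCK; ring.
Qed.

Lemma det_Phi1 k A B Cc D : A * D - B * Cc = 1 -> \det (Phi1 k A B Cc D) = 1.
Proof.
move=> det1; have [L0 _] := Lam_unitary k; rewrite /Phi1; move: (Lam C k) L0 => L L0.
rewrite !det_mulmx !det_mx2.
have -> : (A^* * D^* - - Cc^* * - B^*) * (D * A - L * Cc * (L^-1 * B)) *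
          (D^* * A^* - - (L * B^*) * - (L^-1 * Cc^*)) * (A * D - B * Cc) =
          (A * D - B * Cc)^* * (A * D - B * Cc) * (A * D - B * Cc)^* * (A * D - B * Cc).
  by rewrite !(rmorphB, rmorphM) /=; field.
by rewrite det1 rmorph1 !mulr1.
Qed.

Lemma det_Phi2 A B Cc D : A * D - B * Cc = 1 -> \det (Phi2 A B Cc D) = 1.
Proof.
move=> det1; rewrite /Phi2 det_mulmx !det_mx2.
have -> : D^* * A^* - - B^* * - Cc^* = (A * D - B * Cc)^*.
  by rewrite !(rmorphB, rmorphM) /=; ring.
by rewrite det1 rmorph1 mulr1.
Qed.

End Monodromy.

Section RealParametrization.
Variable C : numClosedFieldType.
Implicit Types (a b h : C).

Lemma sqr_gt0 b : b \is Num.real -> b != 0 -> 0 < b ^+ 2.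
Proof. by move=> bR b0; rewrite -real_normK // exprn_gt0 // normr_gt0. Qed.

Lemma norm_gt1_of h b : h \is Num.real -> b \is Num.real ->
  (h ^+ 2 - 1) * b ^+ 2 = 1 -> 1 < `|h|.
Proof.
move=> hR bR E.
have b0 : b != 0 by apply: contra_eq_neq E => ->; rewrite expr0n mulr0 eq_sym oner_eq0.
have : 0 < h ^+ 2 - 1 by rewrite -(pmulr_lgt0 _ (sqr_gt0 bR b0)) E ltr01.
rewrite subr_gt0 -real_normK // -[X in X < _](expr1n _ 2).
by rewrite ltr_pXn2r ?nnegrE ?normr_ge0.
Qed.

Lemma norm_lt1_of h b : h \is Num.real -> b \is Num.real ->
  (1 - h ^+ 2) * b ^+ 2 = 1 -> `|h| < 1.
Proof.
move=> hR bR E.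
have b0 : b != 0 by apply: contra_eq_neq E => ->; rewrite expr0n mulr0 eq_sym oner_eq0.
have : 0 < 1 - h ^+ 2 by rewrite -(pmulr_lgt0 _ (sqr_gt0 bR b0)) E ltr01.
rewrite subr_gt0 -real_normK // -[X in _ < X](expr1n _ 2).
by rewrite ltr_pXn2r ?nnegrE ?normr_ge0.
Qed.

Lemma hyperbolic_ratio h : h \is Num.real -> 1 < `|h| ->
  exists a b, [/\ a \is Num.real, b \is Num.real, 0 < a, a ^+ 2 - b ^+ 2 = 1 & a = h * b].
Proof.
move=> hR h_gt1.
have h0 : h != 0 by rewrite -normr_gt0 (lt_trans ltr01).
have h2_gt1 : 1 < h ^+ 2 by rewrite -real_normK // exprn_egt1.
have h21 : h ^+ 2 - 1 != 0 by rewrite subr_eq0 gt_eqF.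
have s_gt0 : 0 < sqrtC (h ^+ 2 - 1) by rewrite sqrtC_gt0 subr_gt0.
have s2 : sqrtC (h ^+ 2 - 1) ^+ 2 = h ^+ 2 - 1 by rewrite sqrtCK.
set s := sqrtC _ in s_gt0 s2.
have s0 : s != 0 by rewrite gt_eqF.
have a_gt0 : 0 < `|h| / s by rewrite divr_gt0 ?normr_gt0.
exists (`|h| / s), (`|h| / s / h); split.
- exact: gtr0_real.
- by rewrite rpred_div // gtr0_real.
- exact: a_gt0.
- by rewrite !expr_div_n real_normK // s2; field; rewrite h0 h21.
- by field; rewrite h0 s0.
Qed.

(* Half-angle formulas: a point (a, b), a > 0, of the hyperbola
   a^2 - b^2 = 1 is (al^2 + be^2, 2 al be) for a point (al, be) of the
   same hyperbola. *)
Lemma hyperbolic_half_angle a b : a \is Num.real -> b \is Num.real -> 0 < a ->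
  a ^+ 2 - b ^+ 2 = 1 ->
  exists al be : C, [/\ al \is Num.real, be \is Num.real, al ^+ 2 - be ^+ 2 = 1,
                       al ^+ 2 + be ^+ 2 = a & 2 * al * be = b].
Proof.
move=> aR bR a_gt0 hyp.
have a1_gt0 : 0 < a + 1 by rewrite addr_gt0.
have a10 : a + 1 != 0 by rewrite gt_eqF.
have b2 : b ^+ 2 = a ^+ 2 - 1 by rewrite -hyp; ring.
have al_gt0 : 0 < sqrtC ((a + 1) / 2) by rewrite sqrtC_gt0 divr_gt0 ?ltr0n.
have al2 : sqrtC ((a + 1) / 2) ^+ 2 = (a + 1) / 2 by rewrite sqrtCK.
set al := sqrtC _ in al_gt0 al2.
have al0 : al != 0 by rewrite gt_eqF.
exists al, (b / (2 * al)); split.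
- exact: gtr0_real.
- by rewrite rpred_div // rpredM ?realn // gtr0_real.
- by rewrite expr_div_n exprMn al2 b2; field; rewrite a10.
- by rewrite expr_div_n exprMn al2 b2; field; rewrite a10.
- by field; rewrite al0.
Qed.

Lemma hyperbolic_param h : h \is Num.real -> 1 < `|h| ->
  exists al be : C, [/\ al \is Num.real, be \is Num.real, al ^+ 2 - be ^+ 2 = 1 &
                       al ^+ 2 + be ^+ 2 = h * (2 * al * be)].
Proof.
move=> hR h_gt1; have [a [b [aR bR a_gt0 hyp ahb]]] := hyperbolic_ratio hR h_gt1.
have [al [be [alR beR hyp' sum prod]]] := hyperbolic_half_angle aR bR a_gt0 hyp.
by exists al, be; split; rewrite // sum prod.
Qed.

Lemma elliptic_ratio h : h \is Num.real -> `|h| < 1 ->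
  exists a b, [/\ a \is Num.real, b \is Num.real, 0 < b, b ^+ 2 - a ^+ 2 = 1 & a = h * b].
Proof.
move=> hR h_lt1.
have h2_lt1 : h ^+ 2 < 1 by rewrite -real_normK // exprn_ilt1 ?normr_ge0.
have h21 : 1 - h ^+ 2 != 0 by rewrite subr_eq0 eq_sym lt_eqF.
have s_gt0 : 0 < sqrtC (1 - h ^+ 2) by rewrite sqrtC_gt0 subr_gt0.
have s2 : sqrtC (1 - h ^+ 2) ^+ 2 = 1 - h ^+ 2 by rewrite sqrtCK.
set s := sqrtC _ in s_gt0 s2.
have s0 : s != 0 by rewrite gt_eqF.
exists (h / s), s^-1; split.
- by rewrite rpred_div // gtr0_real.
- by rewrite rpredV gtr0_real.
- by rewrite invr_gt0.
- by rewrite expr_div_n exprVn s2; field; rewrite h21.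
- by [].
Qed.

Lemma elliptic_half_angle a b : a \is Num.real -> b \is Num.real -> 0 < b ->
  b ^+ 2 - a ^+ 2 = 1 ->
  exists al be : C, [/\ al \is Num.real, be \is Num.real, - (2 * al * be) = 1,
                       al ^+ 2 - be ^+ 2 = a & al ^+ 2 + be ^+ 2 = b].
Proof.
move=> aR bR b_gt0 hyp.
have ab_gt0 : 0 < a + b.
  have a_lt_b : `|a| < b.
    rewrite -(ltr_pXn2r (_ : (0 < 2)%N)) ?nnegrE ?normr_ge0 ?ltW // real_normK //.
    by rewrite -subr_gt0 hyp ltr01.
  by rewrite -ltrBlDr sub0r; move: a_lt_b; rewrite real_ltr_norml // => /andP[].
have ab0 : a + b != 0 by rewrite gt_eqF.
have al_gt0 : 0 < sqrtC ((a + b) / 2) by rewrite sqrtC_gt0 divr_gt0 ?ltr0n.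
have al2 : sqrtC ((a + b) / 2) ^+ 2 = (a + b) / 2 by rewrite sqrtCK.
set al := sqrtC _ in al_gt0 al2.
have al0 : al != 0 by rewrite gt_eqF.
have sq_be : (- (2 * al)^-1) ^+ 2 = (2 * (a + b))^-1.
  by rewrite sqrrN exprVn exprMn al2; field; rewrite ab0.
exists al, (- (2 * al)^-1); split.
- exact: gtr0_real.
- by rewrite rpredN rpredV rpredM ?realn ?gtr0_real.
- by field; rewrite al0.
- apply/eqP; rewrite -subr_eq0 sq_be al2.
  have -> : (a + b) / 2 - (2 * (a + b))^-1 - a = (b ^+ 2 - a ^+ 2 - 1) / (2 * (a + b)).
    by field; rewrite ab0.
  by rewrite hyp subrr mul0r.
- apply/eqP; rewrite -subr_eq0 sq_be al2.
  have -> : (a + b) / 2 + (2 * (a + b))^-1 - b = (1 - (b ^+ 2 - a ^+ 2)) / (2 * (a + b)).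
    by field; rewrite ab0.
  by rewrite hyp subrr mul0r.
Qed.

Lemma elliptic_param h : h \is Num.real -> `|h| < 1 ->
  exists al be : C, [/\ al \is Num.real, be \is Num.real, - (2 * al * be) = 1 &
                       al ^+ 2 - be ^+ 2 = h * (al ^+ 2 + be ^+ 2)].
Proof.
move=> hR h_lt1; have [a [b [aR bR b_gt0 hyp ahb]]] := elliptic_ratio hR h_lt1.
have [al [be [alR beR hyp' diff sum]]] := elliptic_half_angle aR bR b_gt0 hyp.
by exists al, be; split; rewrite // diff sum.
Qed.

End RealParametrization.

Section Closing.
Variable C : numClosedFieldType.
Variables (P1 P2 : 'M[C]_2) (h1 h2 : C).
Hypotheses (detP1 : \det P1 = 1) (detP2 : \det P2 = 1) (h1R : h1 \is Num.real).
Hypothesis fix1 : forall a b : C,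
  P1 *m hform a b *m adj2 P1 = hform a b <-> a = h1 * b.
Hypothesis fix2 : forall a b : C,
  P2 *m hform a b *m adj2 P2 = hform a b <-> a = h2 * b.

(* A simultaneous SU(2) normalization forces a = al^2 + be^2, b = 2 al be to
   satisfy a = h1 b = h2 b; since a^2 - b^2 = 1, b cannot vanish. *)
Lemma SU2_closing_necessary (al be : C) :
  al \is Num.real -> be \is Num.real -> al ^+ 2 - be ^+ 2 = 1 ->
  inSU2 (invmx (mx2 al be be al) *m P1 *m mx2 al be be al) ->
  inSU2 (invmx (mx2 al be be al) *m P2 *m mx2 al be be al) ->
  [/\ 2 * al * be != 0, al ^+ 2 + be ^+ 2 = h1 * (2 * al * be)
    & al ^+ 2 + be ^+ 2 = h2 * (2 * al * be)].
Proof.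
move=> alR beR hyp /(SU2_conj_iff alR beR hyp detP1)/fix1 e1.
move=> /(SU2_conj_iff alR beR hyp detP2)/fix2 e2; split=> //.
apply/eqP => b0.
have : (al ^+ 2 + be ^+ 2) ^+ 2 - (2 * al * be) ^+ 2 = (al ^+ 2 - be ^+ 2) ^+ 2 by ring.
by rewrite hyp e1 b0 mulr0 expr0n subrr expr1n => /eqP; rewrite eq_sym oner_eq0.
Qed.

Lemma SU2_closing_iff :
  (exists al be : C,
     [/\ al \is Num.real, be \is Num.real, al ^+ 2 - be ^+ 2 = 1,
         inSU2 (invmx (mx2 al be be al) *m P1 *m mx2 al be be al) &
         inSU2 (invmx (mx2 al be be al) *m P2 *m mx2 al be be al)])
  <-> h1 = h2 /\ 1 < `|h1|.
Proof.
split=> [[al [be [alR beR hyp s1 s2]]] | [h12 h1_gt1]].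
  have [b0 e1 e2] := SU2_closing_necessary alR beR hyp s1 s2.
  split; first by apply: (mulIf b0); rewrite -e1 -e2.
  apply: (@norm_gt1_of _ _ (2 * al * be) h1R); first by rewrite !rpredM ?realn.
  have -> : (h1 ^+ 2 - 1) * (2 * al * be) ^+ 2 =
            (h1 * (2 * al * be)) ^+ 2 - (2 * al * be) ^+ 2 by ring.
  rewrite -e1; have -> : (al ^+ 2 + be ^+ 2) ^+ 2 - (2 * al * be) ^+ 2 =
                         (al ^+ 2 - be ^+ 2) ^+ 2 by ring.
  by rewrite hyp expr1n.
have [al [be [alR beR hyp e]]] := hyperbolic_param h1R h1_gt1.
exists al, be; split=> //.
  by apply/(SU2_conj_iff alR beR hyp detP1)/fix1.
by apply/(SU2_conj_iff alR beR hyp detP2)/fix2; rewrite -h12.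
Qed.

Lemma SU2_closing_ratio (al be : C) :
  al \is Num.real -> be \is Num.real -> al ^+ 2 - be ^+ 2 = 1 ->
  inSU2 (invmx (mx2 al be be al) *m P1 *m mx2 al be be al) ->
  inSU2 (invmx (mx2 al be be al) *m P2 *m mx2 al be be al) ->
  (al ^+ 2 + be ^+ 2) / (2 * al * be) = h1.
Proof.
move=> alR beR hyp s1 s2; have [b0 e1 _] := SU2_closing_necessary alR beR hyp s1 s2.
by rewrite e1 mulfK.
Qed.

Lemma SU11_closing_necessary (al be : C) :
  al \is Num.real -> be \is Num.real -> - (2 * al * be) = 1 ->
  inSU11 (invmx (mx2 al be al (- be)) *m P1 *m mx2 al be al (- be)) ->
  inSU11 (invmx (mx2 al be al (- be)) *m P2 *m mx2 al be al (- be)) ->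
  [/\ al ^+ 2 + be ^+ 2 != 0, al ^+ 2 - be ^+ 2 = h1 * (al ^+ 2 + be ^+ 2)
    & al ^+ 2 - be ^+ 2 = h2 * (al ^+ 2 + be ^+ 2)].
Proof.
move=> alR beR hyp /(SU11_conj_iff alR beR hyp detP1)/fix1 e1.
move=> /(SU11_conj_iff alR beR hyp detP2)/fix2 e2; split=> //.
apply/eqP => b0.
have : (al ^+ 2 + be ^+ 2) ^+ 2 - (al ^+ 2 - be ^+ 2) ^+ 2 = (- (2 * al * be)) ^+ 2 by ring.
by rewrite hyp e1 b0 mulr0 expr0n subrr expr1n => /eqP; rewrite eq_sym oner_eq0.
Qed.

Lemma SU11_closing_iff :
  (exists al be : C,
     [/\ al \is Num.real, be \is Num.real, - (2 * al * be) = 1,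
         inSU11 (invmx (mx2 al be al (- be)) *m P1 *m mx2 al be al (- be)) &
         inSU11 (invmx (mx2 al be al (- be)) *m P2 *m mx2 al be al (- be))])
  <-> h1 = h2 /\ `|h1| < 1.
Proof.
split=> [[al [be [alR beR hyp s1 s2]]] | [h12 h1_lt1]].
  have [b0 e1 e2] := SU11_closing_necessary alR beR hyp s1 s2.
  split; first by apply: (mulIf b0); rewrite -e1 -e2.
  apply: (@norm_lt1_of _ _ (al ^+ 2 + be ^+ 2) h1R).
    by rewrite rpredD ?rpredX.
  have -> : (1 - h1 ^+ 2) * (al ^+ 2 + be ^+ 2) ^+ 2 =
            (al ^+ 2 + be ^+ 2) ^+ 2 - (h1 * (al ^+ 2 + be ^+ 2)) ^+ 2 by ring.
  rewrite -e1; have -> : (al ^+ 2 + be ^+ 2) ^+ 2 - (al ^+ 2 - be ^+ 2) ^+ 2 =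
                         (- (2 * al * be)) ^+ 2 by ring.
  by rewrite hyp expr1n.
have [al [be [alR beR hyp e]]] := elliptic_param h1R h1_lt1.
exists al, be; split=> //.
  by apply/(SU11_conj_iff alR beR hyp detP1)/fix1.
by apply/(SU11_conj_iff alR beR hyp detP2)/fix2; rewrite -h12.
Qed.

Lemma SU11_closing_ratio (al be : C) :
  al \is Num.real -> be \is Num.real -> - (2 * al * be) = 1 ->
  inSU11 (invmx (mx2 al be al (- be)) *m P1 *m mx2 al be al (- be)) ->
  inSU11 (invmx (mx2 al be al (- be)) *m P2 *m mx2 al be al (- be)) ->
  (al ^+ 2 - be ^+ 2) / (al ^+ 2 + be ^+ 2) = h1.
Proof.
move=> alR beR hyp s1 s2; have [b0 e1 _] := SU11_closing_necessary alR beR hyp s1 s2.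
by rewrite e1 mulfK.
Qed.

End Closing.

Theorem mainTheorem3 (C : numClosedFieldType) (k : nat) (hk : (1 <= k)%N)
  (A1 B1 C1 D1 A2 B2 C2 D2 : C)
  (hdet1 : A1 * D1 - B1 * C1 = 1) (hdet2 : A2 * D2 - B2 * C2 = 1) :
  let Phi1 := Phi1 k A1 B1 C1 D1 in
  let Phi2 := Phi2 A2 B2 C2 D2 in
  (* (a) *)
  (exists (p q r1 r2 r3 r4 : C),
      [/\ r1 \is Num.real, r2 \is Num.real, r3 \is Num.real & r4 \is Num.real] /\
      Phi1 = mx2 r1 p (- p^*) r2 /\
      Phi2 = mx2 q ('i * r3) ('i * r4) (q^*))
  /\
  (* (b) *)
  (forall (p q r1 r2 r3 r4 : C),
      r1 \is Num.real -> r2 \is Num.real -> r3 \is Num.real -> r4 \is Num.real ->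
      Phi1 = mx2 r1 p (- p^*) r2 ->
      Phi2 = mx2 q ('i * r3) ('i * r4) (q^*) ->
      p != 0 -> q != 0 -> r1 != r2 -> r3 != r4 ->
      let h1 := 2 * 'Re p / (r2 - r1) in
      let h2 := 2 * 'Im q / (r4 - r3) in
      ((exists alpha beta : C,
          [/\ alpha \is Num.real, beta \is Num.real, alpha ^+ 2 - beta ^+ 2 = 1,
              inSU2 (invmx (mx2 alpha beta beta alpha) *m Phi1 *m mx2 alpha beta beta alpha) &
              inSU2 (invmx (mx2 alpha beta beta alpha) *m Phi2 *m mx2 alpha beta beta alpha)])
        <-> (h1 = h2 /\ 1 < `|h1|))
      /\
      (forall alpha beta : C,
          alpha \is Num.real -> beta \is Num.real -> alpha ^+ 2 - beta ^+ 2 = 1 ->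
          inSU2 (invmx (mx2 alpha beta beta alpha) *m Phi1 *m mx2 alpha beta beta alpha) ->
          inSU2 (invmx (mx2 alpha beta beta alpha) *m Phi2 *m mx2 alpha beta beta alpha) ->
          (alpha ^+ 2 + beta ^+ 2) / (2 * alpha * beta) = h1)
      /\
      ((exists alpha beta : C,
          [/\ alpha \is Num.real, beta \is Num.real, - (2 * alpha * beta) = 1,
              inSU11 (invmx (mx2 alpha beta alpha (- beta)) *m Phi1 *m mx2 alpha beta alpha (- beta)) &
              inSU11 (invmx (mx2 alpha beta alpha (- beta)) *m Phi2 *m mx2 alpha beta alpha (- beta))])
        <-> (h1 = h2 /\ `|h1| < 1))
      /\
      (forall alpha beta : C,
          alpha \is Num.real -> beta \is Num.real -> - (2 * alpha * beta) = 1 ->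
          inSU11 (invmx (mx2 alpha beta alpha (- beta)) *m Phi1 *m mx2 alpha beta alpha (- beta)) ->
          inSU11 (invmx (mx2 alpha beta alpha (- beta)) *m Phi2 *m mx2 alpha beta alpha (- beta)) ->
          (alpha ^+ 2 - beta ^+ 2) / (alpha ^+ 2 + beta ^+ 2) = h1)).
Proof.
move=> P1 P2; split.
  rewrite /P1 /P2.
  have [p [r1 [r2 [r1R r2R ->]]]] := Phi1_form k A1 B1 C1 D1.
  have [q [r3 [r4 [r3R r4R ->]]]] := Phi2_form A2 B2 C2 D2.
  by exists p, q, r1, r2, r3, r4.
move=> p q r1 r2 r3 r4 r1R r2R r3R r4R e1 e2 _ _ r12 r34 h1 h2.
have det1 : \det P1 = 1 by exact: det_Phi1.
have det2 : \det P2 = 1 by exact: det_Phi2.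
have h1R : h1 \is Num.real by rewrite rpred_div ?rpredM ?rpredB ?realn ?Creal_Re.
have fix1 a b : P1 *m hform a b *m adj2 P1 = hform a b <-> a = h1 * b.
  by rewrite e1; apply: shape1_preserves_ratio; rewrite // -e1.
have fix2 a b : P2 *m hform a b *m adj2 P2 = hform a b <-> a = h2 * b.
  by rewrite e2; apply: shape2_preserves_ratio; rewrite // -e2.
split; first exact: SU2_closing_iff.
split; first exact: SU2_closing_ratio.
split; first exact: SU11_closing_iff.
exact: SU11_closing_ratio.
Qed.
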